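(* Consider the production planning setting described in the context, in the non-overlapping case, with the continuous budgeted scenario set $\mathcal{U}^c$ (budget $\Gamma^c\ge 0$). Fix $\pmb{x}\in\mathbb{X}$ with $X_t=\sum_{i\in[t]}x_i$. Then the optimal value of the adversarial problem $\max_{\pmb{D}\in\mathcal{U}^c}\sum_{t\in[T]}\max\{f_I(X_t,D_t),f_B(X_t,D_t)\}$ equals the optimal value of $$\max\ \sum_{t\in[T]}\max\{f_I(X_t,\widehat{D}_t-\delta_t),\,f_B(X_t,\widehat{D}_t+\delta_t)\}\quad\text{s.t.}\quad\sum_{t\in[T]}\delta_t\le\Gamma^c,\ \ 0\le\delta_t\le\Delta_t\ (t\in[T]).$$
   Context: There are $T\ge 1$ periods, $[T]=\{1,\dots,T\}$. Given are a production cost $c^P$, an inventory cost $c^I$, a backordering cost $c^B$ and a selling price $b^P$ (independent of the period), and a set $\mathbb{X}\subseteq\mathbb{R}^T_+$ of feasible production plans $\pmb{x}=(x_1,\dots,x_T)$ described by finitely many linear constraints. For a plan write $X_t=\sum_{i\in[t]}x_i$. For $t\in[T-1]$ let $f_I(X_t,D_t)=c^I(X_t-D_t)$ and $f_B(X_t,D_t)=c^B(D_t-X_t)$; for $t=T$ let $f_I(X_T,D_T)=c^I(X_T-D_T)+c^PX_T-b^PD_T$ and $f_B(X_T,D_T)=c^B(D_T-X_T)+c^PX_T-b^PX_T$. Nominal cumulative demands $\widehat{D}_t\ge 0$ satisfy $\widehat{D}_t\le\widehat{D}_{t+1}$, and deviations satisfy $0\le\Delta_t\le\widehat{D}_t$.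 The continuous budgeted scenario set is $\mathcal{U}^c=\{\pmb{D}\in\mathbb{R}^T: D_t\le D_{t+1}\ (t\in[T-1]),\ D_t\in[\widehat{D}_t-\Delta_t,\widehat{D}_t+\Delta_t]\ (t\in[T]),\ \sum_{t\in[T]}|D_t-\widehat{D}_t|\le\Gamma^c\}$ with $\Gamma^c\in\mathbb{R}_+$. The non-overlapping case means $\widehat{D}_t+\Delta_t\le\widehat{D}_{t+1}-\Delta_{t+1}$ for all $t\in[T-1]$. *)

From mathcomp Require Import all_boot all_order all_algebra.
From mathcomp Require Import reals.
Set Implicit Arguments. Unset Strict Implicit. Unset Printing Implicit Defensive.
Import Order.TTheory GRing.Theory Num.Theory.
Local Open Scope ring_scope.

Section Defs.
Variables (R : realType) (T : nat).
Variables (cP cI cB bP : R).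

(* periods are t : 'I_T, i.e. 0..T-1; period t of the paper is t.+1,
   so the last period T of the paper is the index with value T.-1 *)
Definition is_last (t : 'I_T) : bool := (t == T.-1 :> nat).

Definition cumX (x : 'I_T -> R) (t : 'I_T) : R := \sum_(i < T | (i <= t)%N) x i.

Definition fI (t : 'I_T) (X D : R) : R :=
  if is_last t then cI * (X - D) + cP * X - bP * D else cI * (X - D).

Definition fB (t : 'I_T) (X D : R) : R :=
  if is_last t then cB * (D - X) + cP * X - bP * X else cB * (D - X).

Definition Uc (Dhat Delta : 'I_T -> R) (Gamma : R) (D : 'I_T -> R) : Prop :=
  [/\ (forall t1 t2 : 'I_T, t2 = t1.+1 :> nat -> D t1 <= D t2),
      (forall t, Dhat t - Delta t <= D t <= Dhat t + Delta t)
    & \sum_(t < T) `|D t - Dhat t| <= Gamma].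

Definition adv_obj (x D : 'I_T -> R) : R :=
  \sum_(t < T) Num.max (fI t (cumX x t) (D t)) (fB t (cumX x t) (D t)).

Definition delta_feas (Delta : 'I_T -> R) (Gamma : R) (delta : 'I_T -> R) : Prop :=
  \sum_(t < T) delta t <= Gamma /\ (forall t, 0 <= delta t <= Delta t).

Definition ref_obj (x Dhat delta : 'I_T -> R) : R :=
  \sum_(t < T) Num.max (fI t (cumX x t) (Dhat t - delta t))
                       (fB t (cumX x t) (Dhat t + delta t)).
End Defs.

From mathcomp Require Import all_boot all_order all_algebra.
From mathcomp Require Import all_classical all_reals all_analysis.
From mathcomp Require Import ring lra.
Import Order.TTheory GRing.Theory Num.Theory.
Import numFieldNormedType.Exports.
Local Open Scope classical_set_scope.
Local Open Scope ring_scope.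

(* In each period the cost [max (fI X D) (fB X D)] is the maximum of a
   nonincreasing and a nondecreasing affine function of the demand D, so on
   [Dhat - d, Dhat + d] it is at most [max (fI X (Dhat - d)) (fB X (Dhat + d))],
   and this bound is attained at one of the two endpoints.  Hence a scenario D
   is dominated by the reformulation at [delta t = |D t - Dhat t|].  Conversely,
   take a maximiser delta of the reformulation (it exists by compactness of its
   feasible set) and let the adversary pick in each period the worse endpoint:
   the budget is that of delta, and the scenario is nondecreasing because the
   intervals [Dhat t - Delta t, Dhat t + Delta t] do not overlap. *)

Lemma affine_continuous {R : numFieldType} (f : R -> R) :
  (forall y, f y = f 0 + (f 1 - f 0) * y) -> continuous f.
Proof.
move=> f_affine; rewrite (funext f_affine) => y.
apply: continuousD; first exact: cst_continuous.
by apply: continuousM; [exact: cst_continuous | exact: cvg_id].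
Qed.

Lemma sum_continuous {R : numFieldType} {X : topologicalType} {I : finType}
    (F : I -> X -> R) :
  (forall i, continuous (F i)) -> continuous (fun x => \sum_i F i x).
Proof.
move=> F_cont.
exact: (@continuous_big R _ +%R 0 xpredT add_continuous _ _ F (fun i _ => F_cont i)).
Qed.

Section PeriodCost.
Context {R : realType} {T : nat}.
Variables (cP cI cB bP : R) (t : 'I_T) (X : R).

Lemma fI_continuous : continuous (fI cP cI bP t X).
Proof. by apply: affine_continuous => D; rewrite /fI; case: ifP => _; ring. Qed.

Lemma fB_continuous : continuous (fB cP cB bP t X).
Proof. by apply: affine_continuous => D; rewrite /fB; case: ifP => _; ring. Qed.

Definition worst_cost (Dh d : R) : R :=
  Num.max (fI cP cI bP t X (Dh - d)) (fB cP cB bP t X (Dh + d)).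

Lemma worst_cost_continuous (Dh : R) : continuous (worst_cost Dh).
Proof.
move=> d; apply: (@continuous_max _ _ (fun d => fI cP cI bP t X (Dh - d))
                                      (fun d => fB cP cB bP t X (Dh + d))).
  apply: (continuous_comp (f := fun d => Dh - d)); last exact: fI_continuous.
  by apply: continuousB; [exact: cst_continuous | exact: cvg_id].
apply: (continuous_comp (f := fun d => Dh + d)); last exact: fB_continuous.
by apply: continuousD; [exact: cst_continuous | exact: cvg_id].
Qed.

Definition worst_demand (Dh d : R) : R :=
  if fB cP cB bP t X (Dh + d) <= fI cP cI bP t X (Dh - d) then Dh - d else Dh + d.

Lemma worst_demand_bounds (Dh d : R) : 0 <= d ->
  Dh - d <= worst_demand Dh d <= Dh + d.
Proof. by move=> d_ge0; rewrite /worst_demand; case: ifP => _; apply/andP; split; lra. Qed.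

Hypotheses (cI_ge0 : 0 <= cI) (cB_ge0 : 0 <= cB) (bP_ge0 : 0 <= bP).

Lemma fI_nonincreasing : {homo fI cP cI bP t X : D1 D2 /~ D1 <= D2}.
Proof.
move=> D1 D2 le21; have := ler_wpM2l cI_ge0 le21; have := ler_wpM2l bP_ge0 le21.
by rewrite /fI; case: ifP => _; lra.
Qed.

Lemma fB_nondecreasing : {homo fB cP cB bP t X : D1 D2 / D1 <= D2}.
Proof.
move=> D1 D2 le12; have := ler_wpM2l cB_ge0 le12.
by rewrite /fB; case: ifP => _; lra.
Qed.

Lemma period_cost_le_endpoints (lo hi D : R) : lo <= D <= hi ->
  Num.max (fI cP cI bP t X D) (fB cP cB bP t X D) <=
  Num.max (fI cP cI bP t X lo) (fB cP cB bP t X hi).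
Proof.
case/andP=> loD Dhi.
by apply: le_max2; [exact: fI_nonincreasing | exact: fB_nondecreasing].
Qed.

Lemma worst_demand_cost (Dh d : R) : 0 <= d ->
  Num.max (fI cP cI bP t X (worst_demand Dh d)) (fB cP cB bP t X (worst_demand Dh d)) =
  worst_cost Dh d.
Proof.
move=> d_ge0; apply/eqP; rewrite eq_le period_cost_le_endpoints ?worst_demand_bounds //=.
rewrite /worst_cost /worst_demand; case: ifPn => [/max_idPl-> | ].
  by rewrite le_max lexx.
by rewrite -ltNge => /ltW/max_idPr->; rewrite le_max lexx orbT.
Qed.

End PeriodCost.

Section Attainment.
Context {R : realType} {T : nat}.
Variables (Delta : 'I_T -> R) (Gamma : R).

Lemma delta_feas_compact :
  compact [set v : 'rV[R]_T | delta_feas Delta Gamma (v ord0)].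
Proof.
pose box := [set v : 'rV[R]_T | forall t, `[0, Delta t]%classic (v ord0 t)].
apply: (@subclosed_compact _ _ box); last first.
- by move=> v [_ bnd] t /=; rewrite in_itv /= bnd.
- by apply: (@rV_compact _ T (fun t => `[0, Delta t]%classic)) => t; exact: segment_compact.
have -> : [set v : 'rV[R]_T | delta_feas Delta Gamma (v ord0)] =
    (fun v : 'rV[R]_T => \sum_(t < T) v ord0 t) @^-1` [set y | y <= Gamma] `&`
    \bigcap_(t in setT) ((fun v : 'rV[R]_T => v ord0 t) @^-1` `[0, Delta t]%classic).
  apply/seteqP; split=> v /=.
    by case=> sum_le bnd; split=> // t _ /=; rewrite in_itv /= bnd.
  by case=> sum_le bnd; split=> // t; have := bnd t I; rewrite /= in_itv.
apply: closedI.
  apply: preimage_closed; last exact: closed_le.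
  move=> v _; apply: (sum_continuous (fun t (v : 'rV[R]_T) => v ord0 t)) => t.
  exact: coord_continuous.
apply: closed_bigI => t _; apply: preimage_closed; last exact: itv_closed.
by move=> v _; exact: coord_continuous.
Qed.

Lemma delta_feas_argmax (f : ('I_T -> R) -> R) :
  0 <= Gamma -> (forall t, 0 <= Delta t) ->
  continuous (fun v : 'rV[R]_T => f (v ord0)) ->
  exists2 d, delta_feas Delta Gamma d &
    forall d', delta_feas Delta Gamma d' -> f d' <= f d.
Proof.
move=> Gamma_ge0 Delta_ge0 f_cont.
have feas0 : [set v : 'rV[R]_T | delta_feas Delta Gamma (v ord0)] !=set0.
  exists 0; split=> [|t]; first by rewrite big1 // => t _; rewrite mxE.
  by rewrite mxE lexx Delta_ge0.
have [v] := compact_EVT_max feas0 delta_feas_compact (continuous_subspaceT f_cont).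
rewrite inE => v_feas v_max; exists (v ord0) => // d d_feas.
have rowK : (\row_t d t) ord0 = d by apply: funext => t; rewrite mxE.
by have := v_max (\row_t d t); rewrite inE /= rowK; apply.
Qed.

End Attainment.

Section Reformulation.
Context {R : realType} {T : nat}.
Variables (cP cI cB bP Gamma : R) (Dhat Delta x : 'I_T -> R).

Lemma ref_obj_row_continuous :
  continuous (fun v : 'rV[R]_T => ref_obj cP cI cB bP x Dhat (v ord0)).
Proof.
apply: (sum_continuous (fun t (v : 'rV[R]_T) =>
  worst_cost cP cI cB bP t (cumX x t) (Dhat t) (v ord0 t))) => t v.
apply: (continuous_comp (f := fun v : 'rV[R]_T => v ord0 t)).
  exact: coord_continuous.
exact: worst_cost_continuous.
Qed.

Lemma Uc_deviation_feas (D : 'I_T -> R) : Uc Dhat Delta Gamma D ->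
  delta_feas Delta Gamma (fun t => `|D t - Dhat t|).
Proof. by case=> _ D_bnd D_budget; split=> // t; rewrite normr_ge0 ler_distl D_bnd. Qed.

Definition worst_scenario (delta : 'I_T -> R) (t : 'I_T) : R :=
  worst_demand cP cI cB bP t (cumX x t) (Dhat t) (delta t).

Lemma worst_scenario_Uc (delta : 'I_T -> R) :
  (forall t1 t2 : 'I_T, t2 = t1.+1 :> nat -> Dhat t1 + Delta t1 <= Dhat t2 - Delta t2) ->
  delta_feas Delta Gamma delta -> Uc Dhat Delta Gamma (worst_scenario delta).
Proof.
move=> non_overlap [delta_budget delta_bnd].
have ws_bnd t : Dhat t - delta t <= worst_scenario delta t <= Dhat t + delta t.
  by apply: worst_demand_bounds; case/andP: (delta_bnd t).
split.
- move=> t1 t2 /non_overlap.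
  by move: (ws_bnd t1) (ws_bnd t2) (delta_bnd t1) (delta_bnd t2); lra.
- by move=> t; move: (ws_bnd t) (delta_bnd t); lra.
- apply: le_trans delta_budget; apply: ler_sum => t _.
  by rewrite ler_distl ws_bnd.
Qed.

Hypotheses (cI_ge0 : 0 <= cI) (cB_ge0 : 0 <= cB) (bP_ge0 : 0 <= bP).

Lemma adv_obj_le_ref_obj (D : 'I_T -> R) :
  adv_obj cP cI cB bP x D <= ref_obj cP cI cB bP x Dhat (fun t => `|D t - Dhat t|).
Proof.
by apply: ler_sum => t _; apply: period_cost_le_endpoints; rewrite // -ler_distl.
Qed.

Lemma adv_obj_worst_scenario (delta : 'I_T -> R) : (forall t, 0 <= delta t) ->
  adv_obj cP cI cB bP x (worst_scenario delta) = ref_obj cP cI cB bP x Dhat delta.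
Proof. by move=> delta_ge0; apply: eq_bigr => t _; exact: worst_demand_cost. Qed.

End Reformulation.

Theorem lemma4 (R : realType) (T : nat) (cP cI cB bP Gamma : R)
  (m : nat) (A : 'I_m -> 'I_T -> R) (b : 'I_m -> R)
  (Dhat Delta x : 'I_T -> R) :
  (1 <= T)%N ->
  0 <= cP -> 0 <= cI -> 0 <= cB -> 0 <= bP ->
  0 <= Gamma ->
  (forall t, 0 <= Dhat t) ->
  (forall t1 t2 : 'I_T, t2 = t1.+1 :> nat -> Dhat t1 <= Dhat t2) ->
  (forall t, 0 <= Delta t <= Dhat t) ->
  (forall t1 t2 : 'I_T, t2 = t1.+1 :> nat ->
     Dhat t1 + Delta t1 <= Dhat t2 - Delta t2) ->
  (* x is in the polyhedron X = {x in R^T_+ | A x <= b} *)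
  (forall t, 0 <= x t) ->
  (forall i, \sum_(t < T) A i t * x t <= b i) ->
  exists v : R,
    [/\ (exists D, Uc Dhat Delta Gamma D /\ adv_obj cP cI cB bP x D = v),
        (forall D, Uc Dhat Delta Gamma D -> adv_obj cP cI cB bP x D <= v),
        (exists delta, delta_feas Delta Gamma delta /\
                       ref_obj cP cI cB bP x Dhat delta = v)
      & (forall delta, delta_feas Delta Gamma delta ->
                       ref_obj cP cI cB bP x Dhat delta <= v)].
Proof.
move=> _ _ cI_ge0 cB_ge0 bP_ge0 Gamma_ge0 _ _ Delta_bnd non_overlap _ _.
have Delta_ge0 t : 0 <= Delta t by case/andP: (Delta_bnd t).
have [delta delta_ok delta_max] :=
  delta_feas_argmax Delta Gamma (ref_obj cP cI cB bP x Dhat) Gamma_ge0 Delta_ge0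
                    (ref_obj_row_continuous cP cI cB bP Dhat x).
have delta_ge0 t : 0 <= delta t by case: delta_ok => _ /(_ t)/andP[].
exists (ref_obj cP cI cB bP x Dhat delta); split.
- exists (worst_scenario cP cI cB bP Dhat x delta); split.
    exact: worst_scenario_Uc.
  exact: adv_obj_worst_scenario.
- move=> D /Uc_deviation_feas/delta_max; apply: le_trans.
  exact: adv_obj_le_ref_obj.
- by exists delta.
- exact: delta_max.
Qed.
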